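(* Let $(X,d)$ be a compact metric space with $\operatorname{diam}(X,d)=1/2$, let $a\ge\lambda\ge6$ and $L>1$, let $\theta\in\mathcal J(X,d)$, and let $\mu$ be a $q$-homogeneous measure on $(X,\theta)$. Let $\mathcal S$ be a hyperbolic filling with parameters $a,\lambda$. For $v\in\mathcal S$ and $k\in\mathbb N$ define $\rho_v:\mathcal S_{\pi_2(v)+k}\to[0,\infty)$ by $\rho_v(w)=\big(\mu(B_w)/\mu(B_v)\big)^{1/q}$ if $B_w\cap B_d(\pi_1(v),(L+1)a^{-\pi_2(v)})\ne\emptyset$ and $w\in\gamma$ for some $\gamma\in\Gamma_{k,L}(v)$, and $\rho_v(w)=0$ otherwise. Then there exist $c>0$ and $k_0\in\mathbb N$, depending only on $d,\theta,\mu,a,L$, such that for all $k\ge k_0$, all $v\in\mathcal S$ and all $\gamma\in\Gamma_{k,L}(v)$, $\sum_{w\in\gamma}\rho_v(w)\ge c$.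
   Context: Hyperbolic filling: $X_0\subset X_1\subset\cdots$ increasing, each $X_n$ a maximal $a^{-n}$-separated subset of $X$; $\mathcal S_n=\{(x,n):x\in X_n\}$, $\mathcal S=\bigcup_n\mathcal S_n$, $\pi_1(x,n)=x$, $\pi_2(x,n)=n$, $B_v=B_d(\pi_1(v),a^{-\pi_2(v)})$ (open $d$-ball). $G_n$ is the graph on $\mathcal S_n$ in which distinct $v,w$ are adjacent iff $B(\pi_1(v),\lambda a^{-n})\cap B(\pi_1(w),\lambda a^{-n})\neq\emptyset$. $\Gamma_{k,L}(v)$ is the set of paths $(v_1,\dots,v_n)$ in $G_{\pi_2(v)+k}$ (consecutive vertices adjacent) with $\pi_1(v_1)\in B_v$ and $\pi_1(v_n)\notin B_d(\pi_1(v),La^{-\pi_2(v)})$. The sum $\sum_{w\in\gamma}$ runs over the entries of $\gamma$. $\mathcal J(X,d)$: metrics $\theta$ on $X$ such that $\theta(x,a)/\theta(x,b)\le\eta(d(x,a)/d(x,b))$ for all $x,a,b$, $x\ne b$, for some homeomorphism $\eta:[0,\infty)\to[0,\infty)$. A nonzero Borel measure $\mu$ is $q$-homogeneous on $(X,\theta)$ if there is $C$ with $\mu(B_\theta(x,R))\le C(R/r)^q\mu(B_\theta(x,r))$ for all $x\in X$, $0<r\le R$. *)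

From HB Require Import structures.
From mathcomp Require Import all_boot all_order all_algebra.
From mathcomp Require Import all_classical all_reals all_analysis.
From Stdlib Require List.
Set Implicit Arguments. Unset Strict Implicit. Unset Printing Implicit Defensive.
Import Order.TTheory GRing.Theory Num.Theory numFieldNormedType.Exports.
Local Open Scope classical_set_scope.
Local Open Scope ring_scope.

Section Defs.
Variable R : realType.
Variable T : Type.
Implicit Types (d theta : T -> T -> R).

Definition oball d (x : T) (r : R) : set T := [set y | d x y < r].

Definition is_metric d : Prop :=
  [/\ (forall x y, 0 <= d x y), (forall x y, d x y = 0 <-> x = y),
      (forall x y, d x y = d y x) & (forall x y z, d x z <= d x y + d y z)].

Definition metric_open d (A : set T) : Prop :=
  forall x, A x -> exists2 r, 0 < r & oball d x r `<=` A.

Definition metric_compact d : Prop :=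
  forall C : set (set T), C `<=` metric_open d ->
    setT `<=` \bigcup_(A in C) A ->
    exists2 D : set (set T), finite_set D & D `<=` C /\ setT `<=` \bigcup_(A in D) A.

Definition diam d : R := sup (range (fun p : T * T => d p.1 p.2)).

Definition homeo_nonneg (eta : R -> R) : Prop :=
  exists etai : R -> R,
    (forall t, 0 <= t -> [/\ 0 <= eta t, 0 <= etai t, etai (eta t) = t & eta (etai t) = t])
    /\ {within [set t : R | 0 <= t], continuous eta}
    /\ {within [set t : R | 0 <= t], continuous etai}.

Definition in_J d theta : Prop :=
  is_metric theta /\
  exists eta : R -> R, homeo_nonneg eta /\
    forall x a b, x <> b -> theta x a / theta x b <= eta (d x a / d x b).

Definition separated d (eps : R) (Y : set T) : Prop :=
  forall x y, Y x -> Y y -> x <> y -> eps <= d x y.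

Definition maximal_separated d (eps : R) (Y : set T) : Prop :=
  separated d eps Y /\ forall Z, Y `<=` Z -> separated d eps Z -> Z = Y.

Definition hyperbolic_filling d (a : R) (Xn : nat -> set T) : Prop :=
  (forall n, Xn n `<=` Xn n.+1) /\ forall n, maximal_separated d (a ^- n) (Xn n).

(* vertices (x,n) of S; pi_1 = .1, pi_2 = .2 *)
Definition inS (Xn : nat -> set T) (v : T * nat) : Prop := Xn v.2 v.1.

Definition Bv d (a : R) (v : T * nat) : set T := oball d v.1 (a ^- v.2).

Definition adjacent d (a lam : R) (m : nat) (v w : T * nat) : Prop :=
  v <> w /\ (oball d v.1 (lam * a ^- m) `&` oball d w.1 (lam * a ^- m)) !=set0.

Fixpoint chain (rel : T * nat -> T * nat -> Prop) (g : seq (T * nat)) : Prop :=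
  match g with
  | v :: ((w :: _) as t) => rel v w /\ chain rel t
  | _ => True
  end.

Definition is_path d (a lam : R) (Xn : nat -> set T) (m : nat) (g : seq (T * nat)) : Prop :=
  g <> [::] /\ List.Forall (fun w => w.2 = m /\ Xn m w.1) g /\ chain (adjacent d a lam m) g.

Definition Gamma d (a lam L : R) (Xn : nat -> set T) (k : nat) (v : T * nat)
  (g : seq (T * nat)) : Prop :=
  match g with
  | [::] => False
  | w1 :: g' => [/\ is_path d a lam Xn (v.2 + k) g,
                   oball d v.1 (a ^- v.2) w1.1
                 & ~ oball d v.1 (L * a ^- v.2) (last w1 g').1]
  end.

End Defs.

Section Meas.
Variables (R : realType) (dsp : measure_display) (X : measurableType dsp).

Definition q_homogeneous (theta : X -> X -> R) (mu : set X -> \bar R) (q : R) : Prop :=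
  mu setT <> 0%E /\
  exists C : R, forall (x : X) (r Rr : R), 0 < r -> r <= Rr ->
    (mu (oball theta x Rr) <= (C * (Rr / r) `^ q)%:E * mu (oball theta x r))%E.

Definition rho (d : X -> X -> R) (a lam L : R) (Xn : nat -> set X) (mu : set X -> \bar R)
  (q : R) (k : nat) (v w : X * nat) : R :=
  if `[< (Bv d a w `&` oball d v.1 ((L + 1) * a ^- v.2)) !=set0 /\
        exists g, Gamma d a lam L Xn k v g /\ List.In w g >]
  then (fine (mu (Bv d a w)) / fine (mu (Bv d a v))) `^ q^-1
  else 0.
End Meas.

From Pilot Require Import Defs.
From HB Require Import structures.
From mathcomp Require Import all_boot all_order all_algebra.
From mathcomp Require Import all_classical all_reals all_analysis.
From mathcomp Require Import lra ring.
Import Order.TTheory GRing.Theory Num.Theory numFieldNormedType.Exports.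
Local Open Scope classical_set_scope.
Local Open Scope ring_scope.

Set Implicit Arguments. Unset Strict Implicit.

(* Write v = (x, n), r = a^-n, and let z be the first vertex of the path that
   lies outside B_d(x, L r).  Every earlier vertex w = (y, m) lies in
   B_d(x, L r), so rho_v(w) = (mu(B_w) / mu(B_v))^(1/q).  Quasisymmetry turns
   d-ratios bounded by a constant B into theta-ratios bounded by a constant M;
   for a step w -> w' = (y', m) of the path this puts the theta-ball of radius
   theta(y, y') / M about y inside B_w and B_v inside the theta-ball of radius
   3 M theta(x, z) about y, so q-homogeneity gives
   rho_v(w) >= c theta(y, y') / theta(x, z).  Summing up to z, the triangle
   inequality for theta bounds the sum below by c theta(w_1, z) / theta(x, z),
   which is at least c / M by quasisymmetry once more.  Every estimate is
   scale-free, so k_0 = 0 works. *)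

Section Chains.
Variable T : Type.
Implicit Types (rel : T * nat -> T * nat -> Prop) (e w z : T * nat) (g : seq (T * nat)).

Lemma chain_impl rel rel' g :
  (forall e e', rel e e' -> rel' e e') -> chain rel g -> chain rel' g.
Proof.
move=> sub; elim: g => [|e [|e' g] IH] //= [he hg]; split; [exact: sub | exact: IH].
Qed.

Lemma chain_last rel w g z : chain rel (w :: rcons g z) -> rel (last w g) z.
Proof. by elim: g w => [|e g IH] w /= => [[]|[_]]; last apply: IH. Qed.

Lemma chain_first_exit rel (P : T * nat -> Prop) w g :
  P w -> ~ P (last w g) -> chain rel (w :: g) ->
  exists g1 z g2, [/\ g = g1 ++ z :: g2, ~ P z &
                      chain (fun e e' => rel e e' /\ P e) (w :: rcons g1 z)].
Proof.
elim: g w => [|u g IH] w //= Pw nPlast [rwu hg].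
have [Pu|nPu] := pselect (P u); last by exists [::], u, g.
have [g1 [z [g2 [-> nPz hch]]]] := IH u Pu nPlast hg.
by exists (u :: g1), z, g2.
Qed.

Lemma chain_sum_ge (R : numDomainType) (F : T * nat -> R) (f : T * nat -> T * nat -> R) :
  (forall e1 e2 e3, f e1 e3 <= f e1 e2 + f e2 e3) ->
  forall g w z, chain (fun e e' => f e e' <= F e) (w :: rcons g z) ->
  f w z <= \sum_(e <- w :: g) F e.
Proof.
move=> tri; elim => [|u g IH] w z /=; first by rewrite big_seq1; case.
move=> [fwu hg]; rewrite big_cons.
by apply: le_trans (tri w u z) _; apply: lerD => //; apply: IH.
Qed.

End Chains.

Section Metric.
Variables (R : realType) (T : Type).
Implicit Types (d theta : T -> T -> R).

Definition ratio_controlled d theta (B M : R) : Prop :=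
  forall x p p', x <> p' -> d x p <= B * d x p' -> theta x p <= M * theta x p'.

Lemma metric_gt0 d x y : is_metric d -> x <> y -> 0 < d x y.
Proof.
by move=> [d0 deq _ _] xy; rewrite lt_neqAle d0 andbT; apply/eqP => /esym /deq.
Qed.

Lemma metric_xx d x : is_metric d -> d x x = 0.
Proof. by move=> [_ deq _ _]; apply/deq. Qed.

Lemma homeo_nonneg_bounded (eta : R -> R) (B : R) : homeo_nonneg eta ->
  exists2 M, 1 <= M & forall t, 0 <= t -> t <= B -> eta t <= M.
Proof.
move=> [_ [_ [ceta _]]].
have [B0|B0] := ltP B 0.
  by exists 1 => // t t0 tB; have := le_lt_trans t0 (le_lt_trans tB B0); rewrite ltxx.
have ceta0B : {within `[0, B], continuous eta}.
  by apply: continuous_subspaceW ceta => t /=; rewrite in_itv /= => /andP[].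
have [t0 _ maxt0] := EVT_max B0 ceta0B.
exists (Num.max 1 (eta t0)); first by rewrite le_max lexx.
move=> t t_ge0 tB; rewrite le_max; apply/orP; right.
by apply: maxt0; rewrite in_itv /= t_ge0 tB.
Qed.

Lemma in_J_ratio_controlled d theta B : is_metric d -> in_J d theta ->
  exists2 M, 1 <= M & ratio_controlled d theta B M.
Proof.
move=> dm [tm [eta [heta qs]]].
have [M M1 etaM] := homeo_nonneg_bounded B heta.
exists M => // x p p' xp' hB.
have dxp' := metric_gt0 dm xp'.
rewrite -ler_pdivrMr ?(metric_gt0 tm xp') //; apply: le_trans (qs _ _ _ xp') _.
by apply: etaM; rewrite ?ler_pdivrMr // divr_ge0 //; case: dm.
Qed.

Lemma theta_ball_sub_dball d theta B M y y' s :
  is_metric d -> 0 < M -> ratio_controlled d theta B M -> 0 < s -> d y y' <= B * s ->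
  oball theta y (theta y y' / M) `<=` oball d y s.
Proof.
move=> dm M0 hBM s0 hy' p; rewrite /oball /= ltr_pdivlMr // => hp.
rewrite ltNge; apply/negP => sp.
have yp : y <> p by move=> e; move: sp; rewrite -e metric_xx // leNgt s0.
have B0 : 0 <= B by rewrite -(pmulr_lge0 _ s0); apply: le_trans hy'; case: dm.
have := hBM _ _ _ yp (le_trans hy' (ler_wpM2l B0 sp)).
by rewrite mulrC leNgt hp.
Qed.

Lemma oball_metric_open theta x r : is_metric theta -> metric_open theta (oball theta x r).
Proof.
move=> [_ _ _ tri] p /= hp; exists (r - theta x p); first by rewrite subr_gt0.
by move=> w /= hw; apply: le_lt_trans (tri x p w) _; rewrite -ltrBrDl.
Qed.

Lemma diam_neq0_other_point d : is_metric d -> diam d <> 0 -> forall p : T, exists p', p' <> p.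
Proof.
move=> dm hd p; apply: contrapT => hn.
have allp o : o = p by apply: contrapT => h; apply: hn; exists o.
apply: hd; rewrite /diam.
have -> : range (fun pr : T * T => d pr.1 pr.2) = [set 0]; last exact: sup1.
apply/seteqP; split => t /=.
  by move=> [[u v] _ <-] /=; rewrite (allp u) (allp v) metric_xx.
by move=> ->; exists (p, p) => //=; rewrite metric_xx.
Qed.

Lemma dball_metric_open d theta y s :
  is_metric d -> in_J d theta -> (forall p : T, exists p', p' <> p) ->
  metric_open theta (oball d y s).
Proof.
move=> dm hJ other p hp; have [tm _] := hJ.
have [_ _ _ dtri] := dm.
have [p' p'p] := other p.
set del := s - d y p.
have del0 : 0 < del by rewrite subr_gt0.
have [M M1 hBM] := in_J_ratio_controlled (d p p' / del) dm hJ.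
have M0 : 0 < M := lt_le_trans ltr01 M1.
exists (theta p p' / M); first by rewrite divr_gt0 // metric_gt0 // => /esym.
apply: subset_trans (theta_ball_sub_dball dm M0 hBM del0 _) _.
  by rewrite divfK ?gt_eqF.
by move=> w /= hw; apply: le_lt_trans (dtri y p w) _; rewrite -ltrBrDl.
Qed.

Lemma ratio_controlled_exit_le d theta B M x w z (L r : R) :
  is_metric d -> is_metric theta -> ratio_controlled d theta B M ->
  1 < L -> 0 < r -> d x w < r -> L * r <= d x z -> d x z <= B * ((L - 1) * r) ->
  theta x z <= M * theta w z.
Proof.
move=> dm [_ _ tsym _] hBM L1 r0 xw Lz zB.
have [_ _ dsym dtri] := dm.
have Lr_le : (L - 1) * r <= d z w.
  by move: (dtri x w z); rewrite (dsym z) mulrBl mul1r; lra.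
have Lr_gt0 : 0 < (L - 1) * r by rewrite mulr_gt0 // subr_gt0.
have zw : z <> w by move=> e; move: Lr_le; rewrite e metric_xx // leNgt Lr_gt0.
have B0 : 0 <= B by rewrite -(pmulr_lge0 _ Lr_gt0); apply: le_trans zB; case: dm.
by rewrite tsym (tsym w); apply: hBM => //; rewrite dsym (le_trans zB) // ler_wpM2l.
Qed.

End Metric.

Section HomogeneousMeasure.
Variables (R : realType) (dsp : measure_display) (X : measurableType dsp).
Variables (theta : X -> X -> R) (mu : {measure set X -> \bar R}) (q : R).
Hypothesis measurable_oball : forall y s, measurable (oball theta y s).

Lemma q_homogeneous_oball_gt0 x r :
  q_homogeneous theta mu q -> 0 < r -> (0 < mu (oball theta x r))%E.
Proof.
move=> [muT0 [C hC]] r0; rewrite lt0e measure_ge0 andbT; apply/eqP => mu0.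
apply: muT0; apply/eqP; rewrite eq_le measure_ge0 andbT.
apply: le_trans (@measure_sigma_subadditive _ _ _ mu setT
   (fun N : nat => oball theta x (N%:R + r)) (fun N => measurable_oball _ _) measurableT _) _.
  move=> p _; exists (Num.truncn (theta x p)).+1 => //=.
  by apply: lt_trans (truncnS_gt _) _; rewrite ltrDl.
rewrite eseries0 // => N _ _; apply/eqP; rewrite eq_le measure_ge0 andbT.
apply: le_trans (hC x r (N%:R + r) r0 _) _; first by rewrite lerDr.
by rewrite mu0 mule0.
Qed.

Lemma q_homogeneous_const_gt0 : q_homogeneous theta mu q ->
  exists2 C, 0 < C & forall x r Rr, 0 < r -> r <= Rr ->
    (mu (oball theta x Rr) <= (C * (Rr / r) `^ q)%:E * mu (oball theta x r))%E.
Proof.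
move=> [_ [C hC]]; exists (Num.max C 1); first by rewrite lt_max ltr01 orbT.
move=> x r Rr r0 rRr; apply: le_trans (hC x r Rr r0 rRr) _.
by apply: lee_wpmul2r; rewrite ?measure_ge0 // lee_fin ler_wpM2r ?powR_ge0 // le_max lexx.
Qed.

Lemma homogeneous_measure_ratio_ge (C : R) (A B : set X) y rho R0 :
  0 < q -> 0 < C -> (mu setT < +oo)%E ->
  (forall x r Rr, 0 < r -> r <= Rr ->
    (mu (oball theta x Rr) <= (C * (Rr / r) `^ q)%:E * mu (oball theta x r))%E) ->
  measurable A -> measurable B -> 0 < rho -> rho <= R0 ->
  oball theta y rho `<=` A -> B `<=` oball theta y R0 -> (0 < mu B)%E ->
  C^-1 `^ q^-1 * (rho / R0) <= (fine (mu A) / fine (mu B)) `^ q^-1.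
Proof.
move=> q0 C0 mufin hC mA mB rho0 rhoR0 sA sB muB0.
have R00 : 0 < R0 := lt_le_trans rho0 rhoR0.
have mu_fin S : measurable S -> mu S = (fine (mu S))%:E.
  move=> mS; rewrite fineK // ge0_fin_numE ?measure_ge0 //.
  by apply: le_lt_trans mufin; apply: le_measure; rewrite ?inE.
set a := fine (mu A); set b := fine (mu B).
have b0 : 0 < b by rewrite -lte_fin -mu_fin.
have a0 : 0 <= a by rewrite -lee_fin -mu_fin ?measure_ge0.
have ab : b <= C * (R0 / rho) `^ q * a.
  rewrite -lee_fin -mu_fin // EFinM /a -mu_fin //.
  apply: le_trans (_ : mu (oball theta y R0) <= _)%E.
    by apply: le_measure; rewrite ?inE.
  apply: le_trans (hC y rho R0 rho0 rhoR0) _.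
  apply: lee_wpmul2l; first by rewrite lee_fin mulr_ge0 ?powR_ge0 ?ltW.
  by apply: le_measure; rewrite ?inE.
have inv_pow : (rho / R0) `^ q * (R0 / rho) `^ q = 1.
  by rewrite -powRM ?divr_ge0 ?ltW // mulrA divfK ?gt_eqF // divff ?gt_eqF // powR1.
have ratio_ge : C^-1 * (rho / R0) `^ q <= a / b.
  rewrite ler_pdivlMr //; apply: le_trans (ler_wpM2l _ ab) _.
    by rewrite mulr_ge0 ?powR_ge0 // invr_ge0 ltW.
  have -> : C^-1 * (rho / R0) `^ q * (C * (R0 / rho) `^ q * a) =
            C^-1 * C * ((rho / R0) `^ q * (R0 / rho) `^ q) * a by ring.
  by rewrite inv_pow mulVf ?gt_eqF // !mul1r.
rewrite -[rho / R0]powRr1 ?divr_ge0 ?(ltW rho0) ?(ltW R00) //.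
rewrite -[1](@divff _ q) ?gt_eqF // powRrM -powRM ?powR_ge0 ?invr_ge0 ?(ltW C0) //.
apply: (@ge0_ler_powR _ q^-1) => //.
all: by rewrite ?nnegrE ?invr_ge0 ?mulr_ge0 ?powR_ge0 ?divr_ge0 ?invr_ge0 // ltW.
Qed.

End HomogeneousMeasure.

Lemma adjacent_dist_lt (R : realType) (T : Type) (d : T -> T -> R) (a lam : R) (m : nat)
  (u u' : T * nat) :
  is_metric d -> Defs.adjacent d a lam m u u' -> d u.1 u'.1 < 2 * (lam * a ^- m).
Proof.
move=> [_ _ dsym dtri] [_ [p [/= hu hu']]].
by apply: le_lt_trans (dtri _ p _) _; rewrite (dsym p); move: hu hu'; rewrite /oball /=; lra.
Qed.

Section Rho.
Variables (R : realType) (dsp : measure_display) (X : measurableType dsp).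
Variables (d : X -> X -> R) (mu : {measure set X -> \bar R}) (a lam L q : R).
Variables (Xn : nat -> set X) (k : nat) (v : X * nat).

Lemma rho_ge0 w : 0 <= rho d a lam L Xn mu q k v w.
Proof. by rewrite /rho; case: ifP => _; [exact: powR_ge0 | exact: lexx]. Qed.

Lemma rho_on_Gamma g w : is_metric d -> 0 < a ->
  Gamma d a lam L Xn k v g -> List.In w g -> d v.1 w.1 < (L + 1) * a ^- v.2 ->
  rho d a lam L Xn mu q k v w = (fine (mu (Bv d a w)) / fine (mu (Bv d a v))) `^ q^-1.
Proof.
move=> dm a0 hg wg hw; rewrite /rho asboolT //; split; last by exists g.
by exists w.1; split => //; rewrite /Bv /oball /= metric_xx // invr_gt0 exprn_gt0.
Qed.

End Rho.

Lemma Gamma_first_exit (R : realType) (T : Type) (d : T -> T -> R) (a lam L : R)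
    (Xn : nat -> set T) (k : nat) (v w : T * nat) (g : seq (T * nat)) :
  is_metric d -> 0 < a -> lam <= a -> 1 <= L -> Gamma d a lam L Xn k v (w :: g) ->
  exists g1 z g2,
    [/\ g = g1 ++ z :: g2, L * a ^- v.2 <= d v.1 z.1,
        d v.1 z.1 < L * a ^- v.2 + 2 * a * a ^- (v.2 + k) &
        chain (fun e e' => d e.1 e'.1 < 2 * a * a ^- (v.2 + k)
                           /\ [/\ List.In e (w :: g), e.2 = (v.2 + k)%N
                                & d v.1 e.1 < L * a ^- v.2])
              (w :: rcons g1 z)].
Proof.
move=> dm a0 lama L1 [[_ [levels hch]] hw hlast].
have level e : List.In e (w :: g) -> e.2 = (v.2 + k)%N.
  by move=> /((List.Forall_forall _ _).1 levels) [].
set P := fun e : T * nat =>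
  [/\ List.In e (w :: g), e.2 = (v.2 + k)%N & d v.1 e.1 < L * a ^- v.2].
have Pw : P w.
  split; [by left | by apply: level; left |].
  by apply: lt_le_trans hw _; rewrite ler_peMl // invr_ge0 exprn_ge0 // ltW.
have nPlast : ~ P (last w g) by case.
have [g1 [z [g2 [eg nPz hch1]]]] := chain_first_exit Pw nPlast hch.
have zg : List.In z (w :: g) by right; rewrite eg; apply: List.in_or_app; right; left.
have Lz : L * a ^- v.2 <= d v.1 z.1.
  by rewrite leNgt; apply/negP => zin; apply: nPz; split => //; exact: level.
have adj_lt e e' : Defs.adjacent d a lam (v.2 + k) e e' -> d e.1 e'.1 < 2 * a * a ^- (v.2 + k).
  move=> /(adjacent_dist_lt dm) /lt_le_trans; apply.
  by rewrite -mulrA ler_wpM2l // ler_wpM2r // invr_ge0 exprn_ge0 // ltW.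
have [adj_last [_ _ Plast]] := chain_last hch1.
exists g1, z, g2; split => //.
  have [_ _ _ dtri] := dm.
  exact: le_lt_trans (dtri _ _ _) (ltrD Plast (adj_lt _ _ adj_last)).
by apply: chain_impl hch1 => e e' [/adj_lt].
Qed.

Section PathEstimate.
Variables (R : realType) (dsp : measure_display) (X : measurableType dsp).
Variables (d theta : X -> X -> R) (mu : {measure set X -> \bar R}) (q C B M : R).
Hypotheses (dm : is_metric d) (tm : is_metric theta).
Hypotheses (q0 : 0 < q) (C0 : 0 < C) (B1 : 1 <= B) (M1 : 1 <= M).
Hypothesis hBM : ratio_controlled d theta B M.
Hypothesis mu_fin : (mu setT < +oo)%E.
Hypothesis hC : forall x r Rr, 0 < r -> r <= Rr ->
  (mu (oball theta x Rr) <= (C * (Rr / r) `^ q)%:E * mu (oball theta x r))%E.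
Hypothesis measurable_theta_ball : forall y s, measurable (oball theta y s).
Hypothesis measurable_d_ball : forall y s, measurable (oball d y s).
Hypothesis mu_theta_ball_gt0 : forall y s, 0 < s -> (0 < mu (oball theta y s))%E.

Let M0 : 0 < M := lt_le_trans ltr01 M1.
Let c := C^-1 `^ q^-1 / (3 * M ^+ 2).

Lemma edge_estimate (x z y y' : X) (r s : R) :
  0 < s -> 0 < r -> r <= d x z -> d x z <= B * r ->
  d x y <= d x z -> d x y' <= B * d x z -> d y y' <= B * s ->
  c * (theta y y' / theta x z) <= (fine (mu (oball d y s)) / fine (mu (oball d x r))) `^ q^-1.
Proof.
move=> s0 r0 rz zr yz y'z yy'.
have [_ _ tsym ttri] := tm.
have [<-|neq_yy'] := pselect (y = y').
  by rewrite metric_xx // mul0r mulr0 powR_ge0.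
have xz : x <> z by move=> e; move: rz; rewrite -e metric_xx // leNgt r0.
set t := theta x z; have t_gt0 : 0 < t := metric_gt0 tm xz.
have near_x p : d x p <= d x z -> theta x p <= M * t.
  move=> pz; apply: hBM => //; apply: le_trans pz _.
  by rewrite ler_peMl // (le_trans (ltW r0) rz).
have y_near := near_x _ yz.
have y'_near : theta x y' <= M * t by exact: hBM.
set rh := theta y y' / M; set R0 := 3 * M * t.
have rh_gt0 : 0 < rh by rewrite divr_gt0 // metric_gt0.
have rhR0 : rh <= R0.
  rewrite ler_pdivrMr //; apply: le_trans (ttri y x y') _; rewrite tsym.
  have : M * t <= M * t * M by rewrite ler_peMr // mulr_ge0 ?ltW.
  rewrite /R0; nra.
have inc_y : oball theta y rh `<=` oball d y s.
  exact: theta_ball_sub_dball dm M0 hBM s0 yy'.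
have inc_x : oball d x r `<=` oball theta y R0.
  move=> p /= /ltW /le_trans /(_ rz) /near_x px; rewrite /oball /=.
  apply: le_lt_trans (ttri y x p) _; rewrite tsym /R0 -mulrA.
  have : 0 < M * t by rewrite mulr_gt0.
  lra.
have mu_x_gt0 : (0 < mu (oball d x r))%E.
  apply: lt_le_trans (mu_theta_ball_gt0 x (_ : 0 < t / M)) _; first by rewrite divr_gt0.
  by apply: le_measure; rewrite ?inE //; exact: theta_ball_sub_dball dm M0 hBM r0 zr.
have -> : c * (theta y y' / t) = C^-1 `^ q^-1 * (rh / R0).
  by rewrite /c /rh /R0; field; rewrite ?gt_eqF ?mulr_gt0.
exact: (homogeneous_measure_ratio_ge measurable_theta_ball q0 C0 mu_fin hC
  (measurable_d_ball y s) (measurable_d_ball x r) rh_gt0 rhR0 inc_y inc_x mu_x_gt0).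
Qed.

Lemma Gamma_rho_sum_ge (a lam L : R) (Xn : nat -> set X) (k : nat) (v : X * nat) g :
  1 <= a -> lam <= a -> 1 < L -> L + 2 * a <= B -> L + 2 * a <= B * (L - 1) ->
  Gamma d a lam L Xn k v g -> c / M <= \sum_(w <- g) rho d a lam L Xn mu q k v w.
Proof.
move=> a1 lama L1 LaB LaB' hg.
have a0 : 0 < a := lt_le_trans ltr01 a1.
case: g hg => [//|w g] hg; have [_ xw _] := hg.
have [g1 [z [g2 [eg Lz zLs hch]]]] := Gamma_first_exit dm a0 lama (ltW L1) hg.
set x := v.1 in xw Lz zLs hch *; set m := (v.2 + k)%N in zLs hch *.
set r := a ^- v.2 in xw Lz zLs hch *; set s := a ^- m in zLs hch *.
have [_ _ _ dtri] := dm; have [_ _ _ ttri] := tm.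
have r0 : 0 < r by rewrite invr_gt0 exprn_gt0.
have s0 : 0 < s by rewrite invr_gt0 exprn_gt0.
have sr : s <= r by rewrite lef_pV2 ?posrE ?exprn_gt0 // ler_weXn2l // leq_addr.
have rz : r <= d x z.1 by apply: le_trans Lz; rewrite ler_peMl // ltW.
have step_le : L * r + 2 * a * s <= (L + 2 * a) * r.
  by rewrite [in X in _ <= X]mulrDl lerD2l ler_wpM2l // mulr_ge0 // ltW.
have zr : d x z.1 <= (L + 2 * a) * r := ltW (lt_le_trans zLs step_le).
have zBr : d x z.1 <= B * r := le_trans zr (ler_wpM2r (ltW r0) LaB).
have zB : d x z.1 <= B * ((L - 1) * r).
  by rewrite mulrA (le_trans zr) // ler_wpM2r // ltW.
set t := theta x z.1.
have t_gt0 : 0 < t by apply: metric_gt0 => // e; move: rz; rewrite e metric_xx // leNgt r0.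
have c_gt0 : 0 < c by rewrite divr_gt0 ?powR_gt0 ?invr_gt0 ?mulr_gt0 ?exprn_gt0.
have edges : chain (fun e e' => c * (theta e.1 e'.1 / t) <= rho d a lam L Xn mu q k v e)
    (w :: rcons g1 z).
  apply: (chain_impl _ hch) => -[y i] [y' i'] /= [yy' [eg' im yx]].
  rewrite (rho_on_Gamma mu q dm a0 hg eg') //= ?im; last first.
    by rewrite mulrDl mul1r ltr_wpDr // ltW.
  apply: (edge_estimate s0 r0 rz zBr); first exact/ltW/(lt_le_trans yx).
    apply/ltW/(le_lt_trans (dtri x y y'))/(lt_le_trans (ltrD yx yy')).
    apply: (le_trans step_le); apply: (le_trans (ler_wpM2r (ltW r0) LaB)).
    by rewrite ler_wpM2l // (le_trans ler01 B1).
  apply: le_trans (ltW yy') _; rewrite ler_wpM2r ?(ltW s0) //.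
  by apply: le_trans LaB; rewrite lerDr ltW // (lt_trans ltr01 L1).
have tri (e1 e2 e3 : X * nat) :
    c * (theta e1.1 e3.1 / t) <= c * (theta e1.1 e2.1 / t) + c * (theta e2.1 e3.1 / t).
  rewrite -mulrDr -mulrDl; apply: (ler_wpM2l (ltW c_gt0)).
  by apply: ler_wpM2r (ttri _ _ _); rewrite invr_ge0 ltW.
have path_ge := chain_sum_ge (F := rho d a lam L Xn mu q k v)
  (f := fun e e' : X * nat => c * (theta e.1 e'.1 / t)) tri edges.
have prefix_le : \sum_(e <- w :: g1) rho d a lam L Xn mu q k v e
    <= \sum_(e <- w :: g) rho d a lam L Xn mu q k v e.
  rewrite eg -cat_cons big_cat /= lerDl.
  by apply: sumr_ge0 => e _; exact: rho_ge0.
apply: (le_trans _ (le_trans path_ge prefix_le)).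
rewrite ler_pM2l // ler_pdivlMr // mulrC ler_pdivrMr // mulrC.
exact: (ratio_controlled_exit_le dm tm hBM L1 r0 xw Lz zB).
Qed.

End PathEstimate.

Theorem lemma4p5 (R : realType) (dsp : measure_display) (X : measurableType dsp)
  (d theta : X -> X -> R) (mu : {measure set X -> \bar R}) (q a L : R) :
  is_metric d -> metric_compact d -> diam d = 1 / 2 ->
  6 <= a -> 1 < L ->
  in_J d theta ->
  @measurable dsp X = <<s metric_open theta >> ->
  (mu setT < +oo)%E ->
  0 < q -> q_homogeneous theta mu q ->
  exists2 c : R, 0 < c &
  exists k0 : nat,
    forall lam : R, 6 <= lam -> lam <= a ->
    forall Xn : nat -> set X, hyperbolic_filling d a Xn ->
    forall k : nat, (k0 <= k)%N ->
    forall v : X * nat, inS Xn v ->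
    forall g : seq (X * nat), Gamma d a lam L Xn k v g ->
      c <= \sum_(w <- g) rho d a lam L Xn mu q k v w.
Proof.
move=> dm _ diam_half a6 L1 hJ measurableE mu_fin q0 hq.
have [tm _] := hJ.
have open_measurable A : metric_open theta A -> measurable A.
  by rewrite measurableE; exact: sub_gen_smallest.
have diam_neq0 : diam d <> 0 by rewrite diam_half; lra.
have other_point := diam_neq0_other_point dm diam_neq0.
have mtheta y s := open_measurable _ (oball_metric_open (x := y) (r := s) tm).
have md y s := open_measurable _ (dball_metric_open (y := y) (s := s) dm hJ other_point).
have mu_pos y (s : R) : 0 < s -> (0 < mu (oball theta y s))%E.
  exact: (q_homogeneous_oball_gt0 mtheta y hq).
have [C C_gt0 hC] := q_homogeneous_const_gt0 hq.
set B := (L + 2 * a) / (L - 1) + (L + 2 * a).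
have [M M1 hBM] := in_J_ratio_controlled B dm hJ.
have La0 : 0 <= L + 2 * a by lra.
have LaB : L + 2 * a <= B by rewrite lerDr divr_ge0 // subr_ge0 ltW.
have LaB' : L + 2 * a <= B * (L - 1).
  have -> : B * (L - 1) = L + 2 * a + (L + 2 * a) * (L - 1).
    by rewrite /B; field; rewrite subr_eq0 gt_eqF.
  by rewrite lerDl mulr_ge0 // subr_ge0 ltW.
exists (C^-1 `^ q^-1 / (3 * M ^+ 2) / M).
  by rewrite !divr_gt0 ?powR_gt0 ?invr_gt0 ?mulr_gt0 ?exprn_gt0 // (lt_le_trans ltr01 M1).
exists 0%N => lam _ lama Xn _ k _ v _ g hg.
by apply: (Gamma_rho_sum_ge dm tm q0 C_gt0 _ M1 hBM mu_fin hC mtheta md mu_pos _ lama L1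
  LaB LaB' hg); lra.
Qed.
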